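(* Consider the algorithm described in the context, and suppose it does not terminate finitely. Then for every $k\in\mathbb{N}$, $$\Delta q_k(s_k,\tau_k)\ge \frac{\sigma_u\tau_k}{\alpha_k}\|s_k\|_2^2+\sigma_c\big(\|c_k\|_2-\|c_k+J_kv_k\|_2\big)>0$$ and $$D_{\Phi_{\tau_k}}(x_k,s_k)\le -\frac{\sigma_u\tau_k}{\alpha_k}\|s_k\|_2^2-\sigma_c\big(\|c_k\|_2-\|c_k+J_kv_k\|_2\big)<0,$$ where $D_{\Phi_\tau}(x,s):=\lim_{t\searrow0}(\Phi_\tau(x+ts)-\Phi_\tau(x))/t$.
   Context: Problem: $\min_{x\in\mathbb{R}^n} f(x)+r(x)$ subject to $c(x)=0$, where $f:\mathbb{R}^n\to\mathbb{R}$ and $c:\mathbb{R}^n\to\mathbb{R}^m$ ($m\le n$) are continuously differentiable and $r:\mathbb{R}^n\to\mathbb{R}_{\ge 0}$ is convex. Write $g(x)=\nabla f(x)$, $J(x)=\nabla c(x)^T$, and $f_k=f(x_k)$, $g_k=g(x_k)$, $c_k=c(x_k)$, $J_k=J(x_k)$, $r_k=r(x_k)$. All norms are Euclidean. Merit function: $\Phi_\tau(x)=\tau(f(x)+r(x))+\|c(x)\|_2$. Algorithm: inputs $x_0$, $\alpha_0>0$, $\tau_{-1}>0$; constants $\kappa_v>0$, $\sigma_c,\epsilon_\tau,\xi,\eta\in(0,1)$, $\sigma_u\in(0,1/2]$, $\bar\sigma_u:=\sigma_u+\tfrac12$. For $k=0,1,\dots$: 1. If $J_k^Tc_k\ne0$,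 compute $v_k$ with $v_k\in\mathrm{Range}(J_k^T)$, $\|v_k\|_2\le\kappa_v\alpha_k\|J_k^Tc_k\|_2$, $\|c_k+J_kv_k\|_2\le\|c_k+J_kv_k^c\|_2$, where $v_k^c=-\beta_k^cJ_k^Tc_k$ with $\beta_k^c$ minimizing $\tfrac12\|c_k-\beta J_kJ_k^Tc_k\|_2^2$ over $0\le\beta\le\kappa_v\alpha_k$. Otherwise set $v_k=0$, and if $c_k\ne0$ terminate. 2. Let $u_k$ be the unique minimizer of $g_k^Tu+\tfrac1{2\alpha_k}\|u\|_2^2+r(x_k+v_k+u)$ subject to $J_ku=0$; set $s_k=v_k+u_k$. If $s_k=0$, terminate. 3. Let $D_k:=g_k^Ts_k+\bar\sigma_u\|s_k\|_2^2/\alpha_k+r(x_k+s_k)-r_k$; $\tau_{k,\mathrm{trial}}=\infty$ if $D_k\le0$, else $\tau_{k,\mathrm{trial}}=(1-\sigma_c)(\|c_k\|_2-\|c_k+J_kv_k\|_2)/D_k$. Set $\tau_k=\tau_{k-1}$ if $\tau_{k-1}\le\tau_{k,\mathrm{trial}}$, else $\tau_k=\min\{(1-\epsilon_\tau)\tau_{k-1},\tau_{k,\mathrm{trial}}\}$. 4. With $\Delta q_k(s,\tau):=-\tau(g_k^Ts+\tfrac1{2\alpha_k}\|s\|_2^2+r(x_k+s)-r_k)+\|c_k\|_2-\|c_k+J_ks\|_2$: if $\Phi_{\tau_k}(x_k+s_k)\le\Phi_{\tau_k}(x_k)-\eta\Delta q_k(s_k,\tau_k)$ set $x_{k+1}=x_k+s_k$,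 $\alpha_{k+1}=\alpha_k$; else $x_{k+1}=x_k$, $\alpha_{k+1}=\xi\alpha_k$. Standing assumption: there is an open convex set $\mathcal X$ containing all iterates $x_k$ and trial points $x_k+s_k$ such that $f$ is bounded below on $\mathcal X$, $\nabla f$ is bounded and Lipschitz continuous on $\mathcal X$, $c$ is bounded on $\mathcal X$, $J$ is bounded and Lipschitz continuous on $\mathcal X$, and all subgradients of $r$ at points of $\mathcal X$ are uniformly bounded in norm. *)

(* points of R^n are column vectors 'cV[R]_n. *)
From HB Require Import structures.
From mathcomp Require Import all_boot all_order all_algebra.
From mathcomp Require Import all_classical all_reals all_analysis.
Set Implicit Arguments. Unset Strict Implicit. Unset Printing Implicit Defensive.
Import Order.TTheory GRing.Theory Num.Theory.
Import numFieldNormedType.Exports.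
Local Open Scope ring_scope.

Definition dotv {R : realType} {n : nat} (u w : 'cV[R]_n) : R :=
  \sum_(i < n) u i 0 * w i 0.
Definition enorm {R : realType} {n : nat} (u : 'cV[R]_n) : R :=
  Num.sqrt (dotv u u).
(* Frobenius norm of a matrix (used only to express "J is bounded / Lipschitz") *)
Definition fnorm {R : realType} {m n : nat} (A : 'M[R]_(m, n)) : R :=
  Num.sqrt (\sum_(i < m) \sum_(j < n) A i j ^+ 2).

Definition convex_fn {R : realType} {n : nat} (r : 'cV[R]_n -> R) : Prop :=
  forall (y z : 'cV[R]_n) (t : R), 0 <= t -> t <= 1 ->
    r (t *: y + (1 - t) *: z) <= t * r y + (1 - t) * r z.
Definition convex_setv {R : realType} {n : nat} (X : set 'cV[R]_n) : Prop :=
  forall (y z : 'cV[R]_n) (t : R), X y -> X z -> 0 <= t -> t <= 1 ->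
    X (t *: y + (1 - t) *: z).
Definition subgrad {R : realType} {n : nat} (r : 'cV[R]_n -> R) (y d : 'cV[R]_n) : Prop :=
  forall z, r y + dotv d (z - y) <= r z.

Definition merit {R : realType} {n m : nat} (f r : 'cV[R]_n -> R)
  (c : 'cV[R]_n -> 'cV[R]_m) (tau : R) (y : 'cV[R]_n) : R :=
  tau * (f y + r y) + enorm (c y).

Definition dq {R : realType} {n m : nat} (r : 'cV[R]_n -> R) (xk gk : 'cV[R]_n)
  (ck : 'cV[R]_m) (Jk : 'M[R]_(m, n)) (alphak : R) (s : 'cV[R]_n) (tau : R) : R :=
  - tau * (dotv gk s + (enorm s) ^+ 2 / (2 * alphak) + r (xk + s) - r xk)
  + enorm ck - enorm (ck + Jk *m s).

(* tau_{k-1}, with tau_{-1} = taum1 *)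
Definition tau_prev {R : realType} (taum1 : R) (tau : nat -> R) (k : nat) : R :=
  if k is k'.+1 then tau k' else taum1.

Definition Dk {R : realType} {n : nat} (r : 'cV[R]_n -> R) (xk gk sk : 'cV[R]_n)
  (alphak sigma_u : R) : R :=
  dotv gk sk + (sigma_u + 1 / 2) * (enorm sk) ^+ 2 / alphak + r (xk + sk) - r xk.

Definition tau_trial {R : realType} (D sigma_c normc normcv : R) : \bar R :=
  if D <= 0 then +oo%E else ((1 - sigma_c) * (normc - normcv) / D)%:E.

Definition tau_update {R : realType} (taup eps_tau : R) (trial : \bar R) : R :=
  if (taup%:E <= trial)%E then taup else Num.min ((1 - eps_tau) * taup) (fine trial).

(* If J_k^T c_k <> 0, the Cauchy decrease condition makes the normal step strictly
   reduce the linearized infeasibility ||c_k|| - ||c_k + J_k v_k||. Otherwise v_k = 0,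
   and comparing the tangential step u_k with its rescalings t u_k (still in the null
   space of J_k), together with the convexity of r, gives D_k <= 0. In both cases the
   update of tau yields tau_k D_k <= (1 - sigma_c)(||c_k|| - ||c_k + J_k v_k||), which
   rearranges into the lower bound on Delta q_k. For the directional derivative, f and
   c are differentiable while r and ||c_k + t J_k s_k|| are convex in t, so their
   one-sided slopes at 0 exist and are bounded by the chords over [0, 1]; this gives
   D_Phi <= -Delta q_k. *)

From HB Require Import structures.
From mathcomp Require Import all_boot all_order all_algebra.
From mathcomp Require Import all_classical all_reals all_analysis.
From mathcomp Require Import ring lra.
Import Order.TTheory GRing.Theory Num.Theory.
Import numFieldNormedType.Exports.
Local Open Scope classical_set_scope.
Local Open Scope ring_scope.

Section Euclidean.
Context {R : realType} {n : nat}.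
Implicit Types (u w : 'cV[R]_n) (a : R).

Lemma dotvC u w : dotv u w = dotv w u.
Proof. by apply: eq_bigr => i _; rewrite mulrC. Qed.

Lemma dotvDr u w z : dotv u (w + z) = dotv u w + dotv u z.
Proof. by rewrite /dotv -big_split; apply: eq_bigr => i _; rewrite mxE mulrDr. Qed.

Lemma dotvDl u w z : dotv (w + z) u = dotv w u + dotv z u.
Proof. by rewrite dotvC dotvDr !(dotvC u). Qed.

Lemma dotvZr u w a : dotv u (a *: w) = a * dotv u w.
Proof. by rewrite /dotv mulr_sumr; apply: eq_bigr => i _; rewrite mxE mulrCA. Qed.

Lemma dotvZl u w a : dotv (a *: w) u = a * dotv w u.
Proof. by rewrite dotvC dotvZr dotvC. Qed.

Lemma dotvv_ge0 u : 0 <= dotv u u.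
Proof. by rewrite sumr_ge0 // => i _; rewrite -expr2 sqr_ge0. Qed.

Lemma dotvv_eq0 u : dotv u u = 0 -> u = 0.
Proof.
move=> /eqP; rewrite psumr_eq0 => [/allP u0|i _]; last by rewrite -expr2 sqr_ge0.
apply/matrixP => i j; rewrite (ord1 j) mxE.
by apply/eqP; rewrite -sqrf_eq0 expr2; apply: u0; rewrite mem_index_enum.
Qed.

Lemma dotv_mulmx m (c : 'cV[R]_m) (J : 'M[R]_(m, n)) w :
  dotv c (J *m w) = dotv (J^T *m c) w.
Proof.
rewrite /dotv; under eq_bigr do rewrite mxE big_distrr.
under [RHS]eq_bigr do rewrite mxE big_distrl.
rewrite exchange_big /=; apply: eq_bigr => i _; apply: eq_bigr => j _.
by rewrite mxE; ring.
Qed.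

Lemma enorm_ge0 u : 0 <= enorm u.
Proof. exact: sqrtr_ge0. Qed.

Lemma enorm_sqr u : enorm u ^+ 2 = dotv u u.
Proof. by rewrite sqr_sqrtr // dotvv_ge0. Qed.

Lemma enorm_eq0 u : enorm u = 0 -> u = 0.
Proof. by move=> u0; apply: dotvv_eq0; rewrite -enorm_sqr u0 expr0n. Qed.

Lemma enorm_sqrDZ u w a :
  enorm (u + a *: w) ^+ 2 = enorm u ^+ 2 + 2 * a * dotv u w + a ^+ 2 * enorm w ^+ 2.
Proof. by rewrite !enorm_sqr !dotvDl !dotvDr !dotvZl !dotvZr (dotvC w u); ring. Qed.

Lemma enormZ u a : enorm (a *: u) = `|a| * enorm u.
Proof. by rewrite /enorm dotvZl dotvZr mulrA sqrtrM ?sqr_ge0 // -expr2 sqrtr_sqr. Qed.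

Lemma enormN u : enorm (- u) = enorm u.
Proof. by rewrite -scaleN1r enormZ normrN1 mul1r. Qed.

Lemma dotv_le_enorm u w : dotv u w <= enorm u * enorm w.
Proof.
have [w0|w_neq0] := eqVneq (enorm w) 0.
  rewrite (enorm_eq0 _ w0) /dotv big1 ?mulr_ge0 ?enorm_ge0 // => i _.
  by rewrite mxE mulr0.
have sqr_le : dotv u w ^+ 2 <= (enorm u * enorm w) ^+ 2.
  rewrite -subr_ge0 (_ : _ - _ =
    enorm w ^+ 2 * enorm (u + (- (dotv u w / enorm w ^+ 2)) *: w) ^+ 2).
    by rewrite mulr_ge0 ?sqr_ge0.
  by rewrite enorm_sqrDZ; field.
apply: (le_trans (ler_norm _)).
by rewrite -(ler_pXn2r (isT : (0 < 2)%N)) ?nnegrE ?mulr_ge0 ?enorm_ge0 // real_normK ?num_real.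
Qed.

Lemma ler_enormD u w : enorm (u + w) <= enorm u + enorm w.
Proof.
rewrite -(ler_pXn2r (isT : (0 < 2)%N)) ?nnegrE ?addr_ge0 ?enorm_ge0 //.
have := enorm_sqrDZ u w 1; rewrite scale1r expr1n mulr1 mul1r => ->.
by have := dotv_le_enorm u w; rewrite sqrrD; lra.
Qed.

Lemma ler_enorm_dist u w : `|enorm u - enorm w| <= enorm (u - w).
Proof.
rewrite ler_norml; apply/andP; split.
  by have := ler_enormD (w - u) u; rewrite subrK -opprB enormN; lra.
by have := ler_enormD (u - w) w; rewrite subrK; lra.
Qed.

(* [`|u|] is the max-entry norm that carries the topology of matrices. *)
Lemma enorm_le_mx_norm u : enorm u <= n%:R * `|u|.
Proof.
have entry_le i : `|u i 0| <= `|u|.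
  by rewrite [`|u|]mx_normrE; apply/bigmax_geP; right; exists (i, 0).
have dotv_le : dotv u u <= n%:R * `|u| ^+ 2.
  rewrite /dotv mulr_natl -[X in _ *+ X]card_ord -sumr_const; apply: ler_sum => i _.
  by rewrite -expr2 -real_normK ?num_real // lerXn2r ?nnegrE.
have n_le : (n%:R : R) <= n%:R ^+ 2.
  by rewrite -natrX ler_nat; case: n {u entry_le dotv_le} => // k; rewrite leq_pmulr.
rewrite -(ler_pXn2r (isT : (0 < 2)%N)) ?nnegrE ?mulr_ge0 ?enorm_ge0 //.
by rewrite enorm_sqr exprMn (le_trans dotv_le) // ler_wpM2r ?sqr_ge0.
Qed.
End Euclidean.

Definition convex_real {R : realType} (phi : R -> R) : Prop :=
  forall a b l, 0 <= l -> l <= 1 -> phi (l * a + (1 - l) * b) <= l * phi a + (1 - l) * phi b.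

Section ConvexReal.
Context {R : realType} {phi : R -> R}.
Hypothesis phi_cvx : convex_real phi.

Let slope t := (phi t - phi 0) / t.

Lemma convex_real_slope_le t1 t2 : 0 < t1 -> t1 <= t2 -> slope t1 <= slope t2.
Proof.
move=> t1_gt0 t12; have t2_gt0 : 0 < t2 by apply: lt_le_trans t12.
have l_ge0 : 0 <= t1 / t2 by rewrite divr_ge0 ?ltW.
have l_le1 : t1 / t2 <= 1 by rewrite ler_pdivrMr // mul1r.
have := phi_cvx t2 0 _ l_ge0 l_le1; rewrite mulr0 addr0 divfK ?gt_eqF // => cvx.
rewrite /slope ler_pdivrMr // mulrAC -mulrA mulrC.
by set l := t1 / t2 in cvx *; lra.
Qed.

Lemma convex_real_slope_ge t : 0 < t -> phi 0 - phi (-1) <= slope t.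
Proof.
move=> t_gt0; have t1_gt0 : 0 < 1 + t by rewrite addr_gt0.
have t1_neq0 : 1 + t != 0 by rewrite gt_eqF.
set l := (1 + t)^-1.
have l_ge0 : 0 <= l by rewrite invr_ge0 ltW.
have l_le1 : l <= 1 by rewrite invf_le1 // lerDl ltW.
have := phi_cvx t (-1) _ l_ge0 l_le1.
have -> : l * t + (1 - l) * -1 = 0 by rewrite /l; field.
have -> : 1 - l = t * l by rewrite /l; field.
rewrite /slope ler_pdivlMr // => cvx.
have : (1 + t) * phi 0 <= phi t + t * phi (-1).
  have -> : phi t + t * phi (-1) = (1 + t) * (l * phi t + t * l * phi (-1)).
    by rewrite /l; field.
  by rewrite ler_pM2l.
lra.
Qed.

Lemma convex_real_right_deriv :
  exists2 L, slope @ 0^'+ --> L & L <= phi 1 - phi 0.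
Proof.
have lt02 : (BRight (0 : R) < BLeft 2)%O by rewrite bnd_simp.
have slope_mono : {in Interval (BRight (0 : R)) (BLeft 2) &, nondecreasing_fun slope}.
  by move=> a b; rewrite !in_itv /= => /andP[a_gt0 _] _ ab; exact: convex_real_slope_le.
have slope_lb : has_lbound (slope @` [set` Interval (BRight (0 : R)) (BLeft 2)]).
  exists (phi 0 - phi (-1)) => y [t]; rewrite /= in_itv /= => /andP[t_gt0 _] <-.
  exact: convex_real_slope_ge.
have := nondecreasing_at_right_cvgr lt02 slope_mono slope_lb.
set L := inf _ => slope_cvg; exists L => //.
have <- : slope 1 = phi 1 - phi 0 by rewrite /slope divr1.
by apply: ge_inf => //; exists 1 => //=; rewrite in_itv /=; lra.
Qed.
End ConvexReal.

Section DirectionalDerivative.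
Context {R : realType}.

Lemma convex_fn_line {n} {h : 'cV[R]_n -> R} (x d : 'cV[R]_n) :
  convex_fn h -> convex_real (fun t => h (x + t *: d)).
Proof.
move=> h_cvx a b l l_ge0 l_le1.
have -> : x + (l * a + (1 - l) * b) *: d = l *: (x + a *: d) + (1 - l) *: (x + b *: d).
  by apply/matrixP => i j; rewrite !mxE; ring.
exact: h_cvx.
Qed.

Lemma convex_fn_enorm {n} : convex_fn (@enorm R n).
Proof.
move=> y z l l_ge0 l_le1; apply: (le_trans (ler_enormD _ _)).
by rewrite !enormZ !ger0_norm // subr_ge0.
Qed.

Lemma cvg_diff_quotient_at_right {V W : normedModType R} (f : V -> W) a v :
  differentiable f a ->
  (fun t : R => t^-1 *: (f (a + t *: v) - f a)) @ 0^'+ --> 'd f a v.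
Proof.
move=> f_diff; rewrite -deriveE //; apply: cvg_dnbhs_at_right.
have -> : (fun t : R => t^-1 *: (f (a + t *: v) - f a)) =
          (fun t => t^-1 *: ((f \o shift a) (t *: v) - f a)).
  by apply/funext => t /=; rewrite [a + _]addrC.
exact: (@diff_derivable _ _ _ f a v f_diff).
Qed.

Lemma enorm_cvg0 {n T} {F : set_system T} {FF : Filter F} (h : T -> 'cV[R]_n) :
  h @ F --> (0 : 'cV[R]_n) -> enorm (h t) @[t --> F] --> 0.
Proof.
move=> h_cvg0; apply: (@squeeze_cvgr _ _ _ _ (cst 0) (fun t => n%:R * `|h t|)).
- by near=> t; rewrite enorm_ge0 enorm_le_mx_norm.
- exact: cvg_cst.
- by have := cvgMl_tmp (a := n%:R) (cvg_norm h_cvg0); rewrite normr0 mulr0; apply.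
Unshelve. all: by end_near.
Qed.

Lemma cvg_enorm_linearization {n m} (c : 'cV[R]_n -> 'cV[R]_m) (x s : 'cV[R]_n)
    (d : 'cV[R]_m) :
  (fun t : R => t^-1 *: (c (x + t *: s) - c x)) @ 0^'+ --> d ->
  (fun t => (enorm (c (x + t *: s)) - enorm (c x + t *: d)) / t) @ 0^'+ --> 0.
Proof.
set q := fun t : R => t^-1 *: (c (x + t *: s) - c x) => q_cvg.
have err_cvg0 : enorm (q t - d) @[t --> 0^'+] --> 0.
  by apply: enorm_cvg0; rewrite -(subrr d); apply: cvgB => //; exact: cvg_cst.
apply: (@squeeze_cvgr _ _ _ _ (fun t => - enorm (q t - d)) (fun t => enorm (q t - d))).
- near=> t; have t_gt0 : 0 < t by near: t; exact: nbhs_right_gt.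
  rewrite -ler_norml normrM normfV (gtr0_norm t_gt0) ler_pdivrMr //.
  apply: le_trans (ler_enorm_dist _ _) _.
  have -> : c (x + t *: s) - (c x + t *: d) = t *: (q t - d).
    by rewrite scalerBr /q scalerA mulfV ?gt_eqF // scale1r opprD addrA.
  by rewrite enormZ gtr0_norm // mulrC.
- by have := cvgN err_cvg0; rewrite oppr0; apply.
- exact: err_cvg0.
Unshelve. all: by end_near.
Qed.

Lemma merit_dir_deriv_le_dq {n m} {f r : 'cV[R]_n -> R} {c : 'cV[R]_n -> 'cV[R]_m}
    {tau a : R} {x s gx : 'cV[R]_n} {Jx : 'M[R]_(m, n)} :
  0 <= tau -> 0 < a -> convex_fn r ->
  differentiable f x -> 'd f x s = dotv gx s ->
  differentiable c x -> 'd c x s = Jx *m s ->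
  exists2 D, (fun t => (merit f r c tau (x + t *: s) - merit f r c tau x) / t) @ 0^'+ --> D &
    D <= - dq r x gx (c x) Jx a s tau.
Proof.
move=> tau_ge0 a_gt0 r_cvx f_diff dfs c_diff dcs.
have f_cvg : (fun t => (f (x + t *: s) - f x) / t) @ 0^'+ --> dotv gx s.
  rewrite -dfs; under eq_fun do rewrite mulrC.
  exact: cvg_diff_quotient_at_right.
have c_cvg := cvg_diff_quotient_at_right _ _ s c_diff; rewrite dcs in c_cvg.
have [Lr r_cvg Lr_le] := convex_real_right_deriv (convex_fn_line x s r_cvx).
have [Lc lin_cvg Lc_le] :=
  convex_real_right_deriv (convex_fn_line (c x) (Jx *m s) convex_fn_enorm).
rewrite /= !scale0r !addr0 !scale1r in r_cvg lin_cvg Lr_le Lc_le.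
exists (tau * dotv gx s + tau * Lr + Lc + 0); last first.
  have prox_ge0 : 0 <= tau * (enorm s ^+ 2 / (2 * a)).
    by rewrite mulr_ge0 // divr_ge0 ?sqr_ge0 // mulr_ge0 // ltW.
  by have := ler_wpM2l tau_ge0 Lr_le; rewrite /dq; lra.
have -> : (fun t => (merit f r c tau (x + t *: s) - merit f r c tau x) / t) =
  (fun t => tau * ((f (x + t *: s) - f x) / t)
     + tau * ((r (x + t *: s) - r x) / t)
     + (enorm (c x + t *: (Jx *m s)) - enorm (c x)) / t
     + (enorm (c (x + t *: s)) - enorm (c x + t *: (Jx *m s))) / t).
  by apply/funext => t; rewrite /merit; ring.
apply: cvgD; last exact: cvg_enorm_linearization c_cvg.
by apply: cvgD => //; apply: cvgD; apply: cvgMl_tmp.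
Qed.

End DirectionalDerivative.

Section NormalStep.
Context {R : realType} {m n : nat}.

Lemma enorm_descent_step {c q : 'cV[R]_m} {ka : R} :
  0 < ka -> 0 < dotv c q -> exists2 b, 0 < b <= ka & enorm (c - b *: q) < enorm c.
Proof.
move=> ka_gt0 cq_gt0; have Q1_gt0 : 0 < enorm q ^+ 2 + 1 by rewrite ltr_wpDl ?sqr_ge0.
set b := Num.min ka (dotv c q / (enorm q ^+ 2 + 1)).
have b_gt0 : 0 < b by rewrite lt_min ka_gt0 divr_gt0.
have bQ_le : b * (enorm q ^+ 2 + 1) <= dotv c q by rewrite -ler_pdivlMr // ge_min lexx orbT.
exists b; first by rewrite b_gt0 ge_min lexx.
rewrite -(ltr_pXn2r (isT : (0 < 2)%N)) ?nnegrE ?enorm_ge0 // -scaleNr enorm_sqrDZ.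
have bbQ_le : b * (b * (enorm q ^+ 2 + 1)) <= b * dotv c q by rewrite ler_pM2l.
nra.
Qed.

Lemma cauchy_step_decrease (c : 'cV[R]_m) (J : 'M[R]_(m, n)) (v : 'cV[R]_n) (ka : R) :
  0 < ka -> J^T *m c != 0 ->
  (exists betac : R, 0 <= betac <= ka /\
     (forall beta : R, 0 <= beta <= ka ->
        (enorm (c - betac *: (J *m J^T *m c))) ^+ 2 / 2
        <= (enorm (c - beta *: (J *m J^T *m c))) ^+ 2 / 2) /\
     enorm (c + J *m v) <= enorm (c + J *m (- betac *: (J^T *m c)))) ->
  enorm (c + J *m v) < enorm c.
Proof.
move=> ka_gt0 Jc_neq0 [bc [_ [bc_min v_le]]].
have cq_gt0 : 0 < dotv c (J *m J^T *m c).
  rewrite -mulmxA dotv_mulmx lt_def dotvv_ge0 andbT.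
  by apply/eqP => /dotvv_eq0 Jc0; rewrite Jc0 eqxx in Jc_neq0.
have [b /andP[b_gt0 b_le] b_lt] := enorm_descent_step ka_gt0 cq_gt0.
apply: le_lt_trans v_le _; apply: le_lt_trans b_lt.
have -> : c + J *m (- bc *: (J^T *m c)) = c - bc *: (J *m J^T *m c).
  by rewrite -scalemxAr mulmxA scaleNr.
have := bc_min b; rewrite ltW // b_le => /(_ isT).
by rewrite ler_pM2r ?invr_gt0 // ler_pXn2r ?nnegrE ?enorm_ge0.
Qed.
End NormalStep.

Section TangentialStep.
Context {R : realType} {m n : nat}.

Lemma le0_of_le_scaled {e b : R} :
  0 <= b -> (forall t : R, 0 <= t < 1 -> e <= (1 - t) * b) -> e <= 0.
Proof.
move=> b_ge0 e_le; rewrite leNgt; apply/negP => e_gt0.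
have eb_gt0 : 0 < e + b by rewrite ltr_wpDr.
have t_range : 0 <= b / (e + b) < 1.
  by rewrite divr_ge0 ?(ltW eb_gt0) // ltr_pdivrMr // mul1r ltrDr.
have := e_le _ t_range.
have -> : (1 - b / (e + b)) * b = e * b / (e + b) by field; rewrite gt_eqF.
by rewrite ler_pdivlMr //; nra.
Qed.

Context {r : 'cV[R]_n -> R} {J : 'M[R]_(m, n)} {x g u : 'cV[R]_n} {a : R}.
Hypotheses (a_gt0 : 0 < a) (r_cvx : convex_fn r) (Ju0 : J *m u = 0).
Hypothesis u_opt : forall w, J *m w = 0 ->
  dotv g u + enorm u ^+ 2 / (2 * a) + r (x + u) <= dotv g w + enorm w ^+ 2 / (2 * a) + r (x + w).

Lemma optimal_null_step_decrease : dotv g u + r (x + u) - r x + enorm u ^+ 2 / a <= 0.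
Proof.
set b := enorm u ^+ 2 / (2 * a).
have b_ge0 : 0 <= b by rewrite divr_ge0 ?sqr_ge0 // mulr_ge0 // ltW.
have -> : enorm u ^+ 2 / a = 2 * b by rewrite /b; field; rewrite gt_eqF.
apply: (le0_of_le_scaled b_ge0) => t /andP[t_ge0 t_lt1].
have Jtu0 : J *m (t *: u) = 0 by rewrite -scalemxAr Ju0 scaler0.
have := u_opt _ Jtu0; rewrite enormZ exprMn ger0_norm // dotvZr -/b.
have := r_cvx (x + u) x _ t_ge0 (ltW t_lt1).
have -> : t *: (x + u) + (1 - t) *: x = x + t *: u.
  by apply/matrixP => i j; rewrite !mxE; ring.
move=> r_le opt_le; rewrite -subr_le0 -(pmulr_rle0 _ (_ : 0 < 1 - t)) ?subr_gt0 //.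
by rewrite -mulrA -/b in opt_le; lra.
Qed.

Lemma Dk_le0_of_optimal (sigma_u : R) : sigma_u <= 1 / 2 -> Dk r x g u a sigma_u <= 0.
Proof.
move=> sigma_u_le; have := optimal_null_step_decrease.
have : (sigma_u - 1 / 2) * (enorm u ^+ 2 / a) <= 0.
  by rewrite mulr_le0_ge0 ?subr_le0 // divr_ge0 ?sqr_ge0 // ltW.
rewrite /Dk -!mulrA; lra.
Qed.
End TangentialStep.

Section MeritParameter.
Context {R : realType}.
Variables (taup eps D sc nc ncv : R).

Lemma tau_update_gt0 : 0 < taup -> 0 < eps < 1 -> sc < 1 -> (D <= 0 \/ 0 < nc - ncv) ->
  0 < tau_update taup eps (tau_trial D sc nc ncv).
Proof.
move=> taup_gt0 /andP[eps_gt0 eps_lt1] sc_lt1 D_or_dec; rewrite /tau_trial.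
have [D_le0|D_gt0] := lerP D 0; first by rewrite /tau_update leey.
have dec_gt0 : 0 < nc - ncv by case: D_or_dec; rewrite // leNgt D_gt0.
rewrite /tau_update; case: ifP => // _ /=.
by rewrite lt_min mulr_gt0 ?subr_gt0 //= divr_gt0 // mulr_gt0 // subr_gt0.
Qed.

Lemma tau_update_mulr_le : 0 <= tau_update taup eps (tau_trial D sc nc ncv) ->
  sc <= 1 -> 0 <= nc - ncv ->
  tau_update taup eps (tau_trial D sc nc ncv) * D <= (1 - sc) * (nc - ncv).
Proof.
set tau := tau_update _ _ _ => tau_ge0 sc_le1 dec_ge0.
have rhs_ge0 : 0 <= (1 - sc) * (nc - ncv) by rewrite mulr_ge0 // subr_ge0.
have [D_le0|D_gt0] := lerP D 0; first exact: le_trans (mulr_ge0_le0 tau_ge0 D_le0) rhs_ge0.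
have : tau <= (1 - sc) * (nc - ncv) / D.
  rewrite /tau /tau_update /tau_trial (lt_geF D_gt0) lee_fin.
  by case: ifP => // _; rewrite ge_min lexx orbT.
by rewrite ler_pdivlMr.
Qed.
End MeritParameter.

Section Iteration.
Context {R : realType} {m n : nat}.
Context {r : 'cV[R]_n -> R} {x g v u s : 'cV[R]_n} {c : 'cV[R]_m} {J : 'M[R]_(m, n)} {a : R}.

Lemma infeasibility_decrease_cases {su : R} :
  0 < a -> su <= 1 / 2 -> convex_fn r ->
  (J^T *m c = 0 -> v = 0) -> (J^T *m c != 0 -> enorm (c + J *m v) < enorm c) ->
  J *m u = 0 ->
  (forall w, J *m w = 0 ->
     dotv g u + enorm u ^+ 2 / (2 * a) + r (x + v + u)
     <= dotv g w + enorm w ^+ 2 / (2 * a) + r (x + v + w)) ->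
  s = v + u ->
  0 <= enorm c - enorm (c + J *m v) /\
  (Dk r x g s a su <= 0 \/ 0 < enorm c - enorm (c + J *m v)).
Proof.
move=> a_gt0 su_le r_cvx v0 v_dec Ju0 u_opt ->.
have [Jc0|Jc_neq0] := eqVneq (J^T *m c) 0.
  rewrite (v0 Jc0) mulmx0 addr0 subrr add0r; split=> //; left.
  apply: (Dk_le0_of_optimal a_gt0 r_cvx Ju0 _ _ su_le) => w Jw0.
  by have := u_opt w Jw0; rewrite (v0 Jc0) !addr0.
by have := v_dec Jc_neq0; rewrite -subr_gt0 => dec_gt0; split; [exact: ltW | right].
Qed.

Lemma dq_ge_reduction_bound {tau su sc taup eps : R} :
  0 < a -> 0 < tau -> 0 < su -> 0 <= sc -> sc <= 1 -> s != 0 -> J *m s = J *m v ->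
  0 <= enorm c - enorm (c + J *m v) ->
  tau = tau_update taup eps (tau_trial (Dk r x g s a su) sc (enorm c) (enorm (c + J *m v))) ->
  let bnd := su * tau / a * enorm s ^+ 2 + sc * (enorm c - enorm (c + J *m v)) in
  bnd <= dq r x g c J a s tau /\ 0 < bnd.
Proof.
move=> a_gt0 tau_gt0 su_gt0 sc_ge0 sc_le1 s_neq0 Js dec_ge0 tau_def bnd.
have tauD_le : tau * Dk r x g s a su <= (1 - sc) * (enorm c - enorm (c + J *m v)).
  by rewrite tau_def; apply: tau_update_mulr_le => //; rewrite -tau_def ltW.
have s_gt0 : 0 < enorm s ^+ 2.
  rewrite exprn_gt0 // lt_def enorm_ge0 andbT.
  by apply/eqP => /enorm_eq0 s0; rewrite s0 eqxx in s_neq0.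
have prox_gt0 : 0 < su * tau / a * enorm s ^+ 2.
  by apply: mulr_gt0 => //; apply: divr_gt0 => //; apply: mulr_gt0.
have dec_term_ge0 : 0 <= sc * (enorm c - enorm (c + J *m v)) by rewrite mulr_ge0.
have -> : dq r x g c J a s tau = - (tau * Dk r x g s a su)
    + su * tau / a * enorm s ^+ 2 + (enorm c - enorm (c + J *m v)).
  by rewrite /dq /Dk Js; field; rewrite gt_eqF.
by rewrite /bnd; split; lra.
Qed.
End Iteration.

Theorem lemma3p4 (R : realType) (n m : nat)
  (f : 'cV[R]_n -> R) (g : 'cV[R]_n -> 'cV[R]_n)
  (c : 'cV[R]_n -> 'cV[R]_m) (J : 'cV[R]_n -> 'M[R]_(m, n))
  (r : 'cV[R]_n -> R)
  (kappa_v sigma_c eps_tau xi eta sigma_u taum1 : R)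
  (x v u s : nat -> 'cV[R]_n) (alpha tau : nat -> R) :
  (* problem data *)
  (m <= n)%N ->
  (forall y, differentiable f y) -> (forall y h, 'd f y h = dotv (g y) h) ->
  continuous g ->
  (forall y, differentiable c y) -> (forall y h, 'd c y h = J y *m h) ->
  continuous J ->
  (forall y, 0 <= r y) -> convex_fn r ->
  (* standing assumption *)
  (exists X : set 'cV[R]_n,
      open X /\ convex_setv X /\
      (forall k, X (x k) /\ X (x k + s k)) /\
      (exists lb, forall y, X y -> lb <= f y) /\
      (exists M, forall y, X y -> enorm (g y) <= M) /\
      (exists L, forall y z, X y -> X z -> enorm (g y - g z) <= L * enorm (y - z)) /\
      (exists M, forall y, X y -> enorm (c y) <= M) /\
      (exists M, forall y, X y -> fnorm (J y) <= M) /\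
      (exists L, forall y z, X y -> X z -> fnorm (J y - J z) <= L * enorm (y - z)) /\
      (exists M, forall y d, X y -> subgrad r y d -> enorm d <= M)) ->
  (* inputs and constants *)
  0 < alpha 0 -> 0 < taum1 -> 0 < kappa_v ->
  0 < sigma_c < 1 -> 0 < eps_tau < 1 -> 0 < xi < 1 -> 0 < eta < 1 ->
  0 < sigma_u <= 1 / 2 ->
  (* step 1 *)
  (forall k,
     ((J (x k))^T *m c (x k) != 0 ->
        (exists w, v k = (J (x k))^T *m w) /\
        enorm (v k) <= kappa_v * alpha k * enorm ((J (x k))^T *m c (x k)) /\
        (exists betac : R,
           0 <= betac <= kappa_v * alpha k /\
           (forall beta : R, 0 <= beta <= kappa_v * alpha k ->
              (enorm (c (x k) - betac *: (J (x k) *m (J (x k))^T *m c (x k)))) ^+ 2 / 2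
              <= (enorm (c (x k) - beta *: (J (x k) *m (J (x k))^T *m c (x k)))) ^+ 2 / 2) /\
           enorm (c (x k) + J (x k) *m v k)
           <= enorm (c (x k) + J (x k) *m (- betac *: ((J (x k))^T *m c (x k)))))) /\
     ((J (x k))^T *m c (x k) = 0 -> v k = 0)) ->
  (* step 2 *)
  (forall k,
     J (x k) *m u k = 0 /\
     (forall w, J (x k) *m w = 0 ->
        dotv (g (x k)) (u k) + (enorm (u k)) ^+ 2 / (2 * alpha k) + r (x k + v k + u k)
        <= dotv (g (x k)) w + (enorm w) ^+ 2 / (2 * alpha k) + r (x k + v k + w)) /\
     s k = v k + u k) ->
  (* the algorithm does not terminate finitely *)
  (forall k, ((J (x k))^T *m c (x k) = 0 -> c (x k) = 0) /\ s k != 0) ->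
  (* step 3 *)
  (forall k,
     tau k = tau_update (tau_prev taum1 tau k) eps_tau
               (tau_trial (Dk r (x k) (g (x k)) (s k) (alpha k) sigma_u) sigma_c
                  (enorm (c (x k))) (enorm (c (x k) + J (x k) *m v k)))) ->
  (* step 4 *)
  (forall k,
     if merit f r c (tau k) (x k + s k)
        <= merit f r c (tau k) (x k)
           - eta * dq r (x k) (g (x k)) (c (x k)) (J (x k)) (alpha k) (s k) (tau k)
     then x k.+1 = x k + s k /\ alpha k.+1 = alpha k
     else x k.+1 = x k /\ alpha k.+1 = xi * alpha k) ->
  forall k,
    let bnd := sigma_u * tau k / alpha k * (enorm (s k)) ^+ 2
               + sigma_c * (enorm (c (x k)) - enorm (c (x k) + J (x k) *m v k)) in
    (bnd <= dq r (x k) (g (x k)) (c (x k)) (J (x k)) (alpha k) (s k) (tau k) /\ 0 < bnd) /\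
    (exists DPhi : R,
       (fun t : R => (merit f r c (tau k) (x k + t *: s k) - merit f r c (tau k) (x k)) / t)
         @ at_right 0 --> DPhi /\
       DPhi <= - bnd /\ - bnd < 0).
Proof.
move=> _ f_diff df _ c_diff dc _ _ r_cvx _ alpha0_gt0 taum1_gt0 kappa_gt0
  /andP[sc_gt0 sc_lt1] eps_range /andP[xi_gt0 _] _ /andP[su_gt0 su_le]
  step1 step2 nonterm step3 step4.
have alpha_gt0 k : 0 < alpha k.
  by elim: k => // k IH; have := step4 k; case: ifP => _ [_ ->] //; rewrite mulr_gt0.
have decrease k : 0 <= enorm (c (x k)) - enorm (c (x k) + J (x k) *m v k) /\
    (Dk r (x k) (g (x k)) (s k) (alpha k) sigma_u <= 0
     \/ 0 < enorm (c (x k)) - enorm (c (x k) + J (x k) *m v k)).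
  have [cauchy v0] := step1 k; have [Ju0 [u_opt s_def]] := step2 k.
  apply: (infeasibility_decrease_cases (alpha_gt0 k) su_le r_cvx v0 _ Ju0 u_opt s_def).
  move=> Jc_neq0; have [_ [_ betac]] := cauchy Jc_neq0.
  exact: cauchy_step_decrease (mulr_gt0 kappa_gt0 (alpha_gt0 k)) Jc_neq0 betac.
have tau_gt0 k : 0 < tau k.
  by elim: k => [|k IH]; rewrite step3; apply: tau_update_gt0 => //=; exact: (decrease _).2.
move=> k bnd; have [Ju0 [_ s_def]] := step2 k.
have Js : J (x k) *m s k = J (x k) *m v k by rewrite s_def mulmxDr Ju0 addr0.
have [bnd_le bnd_gt0] := dq_ge_reduction_bound (alpha_gt0 k) (tau_gt0 k) su_gt0
  (ltW sc_gt0) (ltW sc_lt1) (nonterm k).2 Js (decrease k).1 (step3 k).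
have [D D_cvg D_le] := merit_dir_deriv_le_dq (ltW (tau_gt0 k)) (alpha_gt0 k) r_cvx
  (f_diff (x k)) (df (x k) (s k)) (c_diff (x k)) (dc (x k) (s k)).
split=> //; exists D; split=> //; split; last by rewrite oppr_lt0.
by move: bnd_le; rewrite /bnd; lra.
Qed.
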